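(* Let $S$ be a finite $p$-group, let $\mathbb{W}(S)$ be the set of elementary abelian normal subgroups $A$ of $S$ such that for every $s\in S$, $[A,s,s]=\{1\}$ implies $[A,s]=\{1\}$, and let $W(S)=\langle \mathbb{W}(S)\rangle$. Then: (i) $W(S)$ is a characteristic subgroup of $S$; (ii) $W(S)\in\mathbb{W}(S)$, and it is the unique largest member of $\mathbb{W}(S)$ with respect to inclusion; (iii) $\Omega(Z(S))\le W(S)$; (iv) if $W(S)\le T\le S$ then $W(S)\le W(T)$.
   Context: $\Omega(X)$ denotes the subgroup generated by elements of order $p$ in $X$; $[A,s,s]=[[A,s],s]$. *)

From mathcomp Require Import all_boot all_fingroup all_solvable.
Set Implicit Arguments. Unset Strict Implicit. Unset Printing Implicit Defensive.
Local Open Scope group_scope.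

Definition commE (gT : finGroupType) (A : {set gT}) (s : gT) : {set gT} :=
  <<[set [~ a, s] | a in A]>>.

Definition WWset (gT : finGroupType) (p : nat) (S : {set gT}) : {set {set gT}} :=
  [set A : {set gT} | [&& group_set A, A <| S, p.-abelem A &
     [forall s in S, (commE (commE A s) s == 1) ==> (commE A s == 1)]]].

Definition Wgrp (gT : finGroupType) (p : nat) (S : {set gT}) : {set gT} :=
  <<\bigcup_(A in WWset p S) A>>.

From mathcomp Require Import all_boot all_fingroup all_solvable.
Set Implicit Arguments. Unset Strict Implicit. Unset Printing Implicit Defensive.
Local Open Scope group_scope.

(* The key fact is that WW(S) is closed under
   joins ([WWset_join]): if A, B are in WW(S), then A and B commute (for a in A,
   b in B, [a, b] lies in B, so b acts quadratically on A and hence centralizes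
   it), which makes A * B elementary abelian, and the condition passes to
   products.  As 1 is in WW(S), a maximal group of WW(S) contains every member,
   hence equals W(S) (part (ii)).  Isomorphisms of S permute WW(S), which gives
   (i) by a cardinality argument; Omega_1(Z(S)) trivially satisfies the
   condition, giving (iii); and the condition is inherited by subgroups T with
   W(S) <= T <= S, giving (iv). *)

Section WW.

Variables (gT : finGroupType) (p : nat).
Implicit Types (S T : {group gT}) (A B : {set gT}).

Lemma commuteMl (x y z : gT) :
  commute x z -> commute y z -> commute (x * y) z.
Proof. by move=> cxz cyz; apply/commute_sym/commuteM; apply/commute_sym. Qed.

Lemma commE1P (X : {set gT}) (s : gT) :
  reflect (forall x, x \in X -> commute x s) (commE X s == 1).
Proof.
rewrite /commE -subG1 gen_subG; apply: (iffP subsetP) => [cXs x Xx | cXs].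
  by apply/commgP; have := cXs _ (imset_f (fun a => [~ a, s]) Xx); rewrite inE.
by move=> _ /imsetP[x Xx ->]; rewrite inE; apply/commgP/cXs.
Qed.

Definition quadratic_centralizes (S A : {set gT}) :=
  forall s, s \in S -> (forall a, a \in A -> commute [~ a, s] s) ->
    forall a, a \in A -> commute a s.

(* Since [A, s] is generated by the [a, s], [[A, s], s] = 1 amounts to s
   commuting with every [a, s]. *)
Lemma WWsetP S A :
  reflect [/\ group_set A, A <| S, p.-abelem A & quadratic_centralizes S A]
          (A \in WWset p S).
Proof.
rewrite inE; apply: (iffP and4P) => [[gA nAS eA /forall_inP qA] | [gA nAS eA qA]].
  split=> // s Ss cAss; apply/commE1P; apply: (implyP (qA s Ss)).
  apply/commE1P => _ /gen_prodgP[n [f fP ->]].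
  elim/big_rec: _ => [|i x _ cxs]; first exact/commute_sym/commute1.
  by apply: commuteMl cxs; have /imsetP[a Aa ->] := fP i; apply: cAss.
split=> //; apply/forall_inP => s Ss; apply/implyP => /commE1P cAss.
apply/commE1P; apply: qA => // a Aa; apply: cAss.
exact/mem_gen/imset_f.
Qed.

Lemma WWset1 S : 1 \in WWset p S.
Proof.
apply/WWsetP; split; [exact: group_set_one | exact: normal1 | exact: abelem1 |].
by move=> s _ _ a /set1P ->; apply/commute_sym/commute1.
Qed.

(* Two members of WW(S) centralize each other: for a in A and b in B the
   commutator [a, b] lies in the abelian normal subgroup B, so b acts
   quadratically on A and the WW-condition for A applies. *)
Lemma WWset_cent S (A B : {group gT}) :
  gval A \in WWset p S -> gval B \in WWset p S -> B \subset 'C(A).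
Proof.
move=> /WWsetP[_ nAS _ qA] /WWsetP[_ nBS eB _].
have sAS := normal_sub nAS; have sBS := normal_sub nBS.
apply/subsetP => b Bb; apply/centP => a Aa; apply: commute_sym.
apply: qA (subsetP sBS b Bb) _ a Aa => a' Aa'.
have Bab : [~ a', b] \in B.
  rewrite commgEr groupM ?groupV // memJ_norm ?groupV //.
  exact: subsetP (normal_norm nBS) a' (subsetP sAS a' Aa').
exact: (centsP (abelem_abelian eB)).
Qed.

Lemma WWset_join S (A B : {group gT}) : prime p ->
  gval A \in WWset p S -> gval B \in WWset p S -> A <*> B \in WWset p S.
Proof.
move=> p_pr WA WB; have cAB := WWset_cent WA WB.
move: WA WB => /WWsetP[_ nAS eA qA] /WWsetP[_ nBS eB qB].
have defAB : A <*> B = A * B.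
  exact/norm_joinEr/(subset_trans (normal_sub nBS) (normal_norm nAS)).
apply/WWsetP; split; [exact: groupP | exact: normalY | |].
  apply/abelemP => //; split.
    by rewrite abelianY (abelem_abelian eA) (abelem_abelian eB) cAB.
  move=> x /=; rewrite defAB => /mulsgP[a b Aa Bb ->].
  rewrite expgMn; last exact/commute_sym/(centP (subsetP cAB b Bb)).
  by rewrite (abelemP p_pr eA).2 // (abelemP p_pr eB).2 // mulg1.
move=> s Ss cABs x /=; rewrite defAB => /mulsgP[a b Aa Bb ->].
apply: commuteMl; [apply: qA Aa | apply: qB Bb] => // [a' Aa' | b' Bb'].
  exact/cABs/(subsetP (joing_subl A B)).
exact/cABs/(subsetP (joing_subr A B)).
Qed.

(* W(S) is the largest member of WW(S): a maximal group of WW(S) absorbs every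
   member by [WWset_join], hence is generated by the union of WW(S). *)
Lemma Wgrp_max S : prime p ->
  Wgrp p S \in WWset p S /\ forall A, A \in WWset p S -> A \subset Wgrp p S.
Proof.
move=> p_pr; pose inWW := fun H : {group gT} => gval H \in WWset p S.
have [M /maxgroupP[WM maxM] _] := @maxgroup_exists _ inWW 1%G (WWset1 S).
have sWWM A : A \in WWset p S -> A \subset M.
  move=> WA; have /WWsetP[gA _ _ _] := WA.
  have WMA := WWset_join p_pr WM (WA : gval (Group gA) \in WWset p S).
  by rewrite -(maxM _ WMA (joing_subl _ _)) joing_subr.
suff -> : Wgrp p S = M by [].
apply/eqP; rewrite eqEsubset gen_subG; apply/andP; split; first exact/bigcupsP.
exact/sub_gen/(bigcup_sup (gval M)).
Qed.

(* A morphism injective on S, mapping S onto itself, maps WW(S) into itself: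
   it preserves and reflects commutation of elements of S. *)
Lemma WWset_injm S (A : {group gT}) (f : {morphism S >-> gT}) :
  'injm f -> f @* S = S -> gval A \in WWset p S -> f @* A \in WWset p S.
Proof.
move=> injf fS /WWsetP[_ nAS eA qA]; have sAS := normal_sub nAS.
have commfE x y : x \in S -> y \in S -> commute (f x) (f y) <-> commute x y.
  move=> Sx Sy; rewrite /commute -!morphM //; split=> [|-> //].
  by move/(injmP injf); apply; rewrite groupM.
apply/WWsetP; split; [exact: groupP | by have := morphim_normal f nAS; rewrite fS |
                      exact: morphim_abelem |].
move=> s; rewrite -{1}fS => /morphimP[t St _ ->] cAs x /morphimP[a Sa Aa ->].
apply/commfE => //; apply: (qA t St _ a Aa) => a' Aa'; have Sa' := subsetP sAS a' Aa'.
apply/commfE; rewrite ?groupR // morphR //.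
by apply: cAs; rewrite mem_morphim.
Qed.

(* W(S) is characteristic: its image under an automorphism lies in WW(S),
   hence in W(S), and has the same order. *)
Lemma Wgrp_char S : prime p -> Wgrp p S \char S.
Proof.
move=> p_pr; have [WW sWWW] := Wgrp_max S p_pr.
have /WWsetP[gW nWS _ _] := WW.
apply/charP; split=> [|f injf fS]; first exact: normal_sub nWS.
have WfW := WWset_injm injf fS (WW : gval (Group gW) \in WWset p S).
by apply/eqP; rewrite eqEcard sWWW //= card_injm ?(normal_sub nWS).
Qed.

(* Omega_1(Z(S)) is an elementary abelian normal subgroup of S centralized by
   all of S, so it satisfies the WW-condition vacuously. *)
Lemma Ohm1_center_WWset S : prime p -> p.-group S -> 'Ohm_1('Z(S)) \in WWset p S.
Proof.
move=> p_pr pS; apply/WWsetP; split; first exact: groupP.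
- exact: char_normal (char_trans (Ohm_char 1 _) (center_char S)).
- exact: Ohm1_abelem (pgroupS (center_sub S) pS) (center_abelian S).
- by move=> s Ss _ a /(subsetP (Ohm_sub 1 _)) /centerP[_ cSa]; apply: cSa.
Qed.

Lemma WWset_subgroup S T A :
  A \subset T -> T \subset S -> A \in WWset p S -> A \in WWset p T.
Proof.
move=> sAT sTS /WWsetP[gA nAS eA qA]; apply/WWsetP; split=> //.
  exact: (normalS (K := Group gA) sAT sTS nAS).
by move=> s Ts; apply/qA/(subsetP sTS).
Qed.

End WW.

Theorem lemma2p12 (gT : finGroupType) (p : nat) (S : {group gT}) :
  prime p -> p.-group S ->
  [/\ Wgrp p S \char S,
      Wgrp p S \in WWset p S /\ (forall A, A \in WWset p S -> A \subset Wgrp p S),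
      'Ohm_1('Z(S)) \subset Wgrp p S
    & forall T : {group gT}, Wgrp p S \subset T -> T \subset S ->
        Wgrp p S \subset Wgrp p T].
Proof.
move=> p_pr pS; have [WW sWWW] := Wgrp_max S p_pr.
split=> //.
- exact: Wgrp_char.
- exact/sWWW/Ohm1_center_WWset.
- move=> T sWT sTS; have [_ sWWWT] := Wgrp_max T p_pr.
  exact/sWWWT/(WWset_subgroup sWT sTS WW).
Qed.
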